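(* Let $S$ be a semigroup and $T$ a subsemigroup of $S$ such that $S\setminus T$ is finite, and suppose that $T$ is finitely right equated. Then $S$ is finitely right equated if and only if $\mathbf{r}_S(a)$ is finitely generated as a right congruence on $S$ for each $a\in S\setminus T$.
   Context: For a semigroup $S$ and $a\in S$, $\mathbf{r}_S(a)=\{(s,t)\in S\times S\mid as=at\}$ (a right congruence); $S$ is finitely right equated if each $\mathbf{r}_S(a)$ is finitely generated as a right congruence, i.e. is the smallest right congruence containing some finite set. *)

From Stdlib Require Import List ProofIrrelevance.
Import ListNotations.

Record Semigroup := {
  carrier :> Type;
  sg_op : carrier -> carrier -> carrier;
  sg_assoc : forall x y z, sg_op x (sg_op y z) = sg_op (sg_op x y) z
}.

Arguments sg_op {s} _ _.

Definition subsemigroup (S : Semigroup) (T : S -> Prop) : Prop :=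
  forall x y, T x -> T y -> T (sg_op x y).

Definition sub_op (S : Semigroup) (T : S -> Prop) (HT : subsemigroup S T)
  (x y : {x : S | T x}) : {x : S | T x} :=
  exist _ (sg_op (proj1_sig x) (proj1_sig y)) (HT _ _ (proj2_sig x) (proj2_sig y)).

Arguments sub_op {S T} HT x y.

Lemma sub_assoc (S : Semigroup) (T : S -> Prop) (HT : subsemigroup S T) :
  forall x y z, sub_op HT x (sub_op HT y z) = sub_op HT (sub_op HT x y) z.
Proof.
  intros [x hx] [y hy] [z hz]; unfold sub_op; simpl.
  apply eq_sig_hprop; [intros; apply proof_irrelevance|]; simpl.
  apply sg_assoc.
Qed.

Arguments sub_assoc {S T} HT x y z.

Definition sub_sg (S : Semigroup) (T : S -> Prop) (HT : subsemigroup S T) : Semigroup :=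
  {| carrier := {x : S | T x}; sg_op := sub_op HT; sg_assoc := sub_assoc HT |}.

Arguments sub_sg {S T} HT.

Definition right_congruence (S : Semigroup) (rho : S -> S -> Prop) : Prop :=
  (forall s, rho s s) /\
  (forall s t, rho s t -> rho t s) /\
  (forall s t u, rho s t -> rho t u -> rho s u) /\
  (forall s t u, rho s t -> rho (sg_op s u) (sg_op t u)).

Definition rc_gen (S : Semigroup) (X : list (S * S)) (s t : S) : Prop :=
  forall rho : S -> S -> Prop, right_congruence S rho ->
    (forall p, In p X -> rho (fst p) (snd p)) -> rho s t.

Definition fin_gen_rc (S : Semigroup) (rho : S -> S -> Prop) : Prop :=
  exists X : list (S * S), forall s t, rc_gen S X s t <-> rho s t.

Definition r_ann (S : Semigroup) (a : S) (s t : S) : Prop := sg_op a s = sg_op a t.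

Definition fin_right_equated (S : Semigroup) : Prop :=
  forall a : S, fin_gen_rc S (r_ann S a).

(** When [a] lies in [T], the right congruence [r_S(a)] is generated by three
    finite families: the generators of [r_T(a)]; the pairs [(u, v)] of
    elements outside [T] with [au = av]; and, for each [u] outside [T] that is
    [r_S(a)]-related to some element of [T], one such pair [(u, t)] with [t]
    in [T].  Any pair [(s, t)] of [r_S(a)] is then reached by first moving each
    of [s], [t] lying outside [T] to its chosen partner in [T], and finally
    joining two elements of [T] inside [r_T(a)].  Elements outside [T] are
    handled by hypothesis, so the equivalence follows. *)

From Stdlib Require Import List Classical ProofIrrelevance.
Import ListNotations.

Lemma list_filter_exists {A : Type} (P : A -> Prop) (m : list A) :
  exists L, (forall x, In x L -> P x) /\ (forall x, In x m -> P x -> In x L).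
Proof.
  induction m as [|y m [L [HL1 HL2]]].
  - exists []; simpl; tauto.
  - destruct (classic (P y)) as [Hy|Hy].
    + exists (y :: L); split.
      * intros x [<-|Hx]; auto.
      * intros x [<-|Hx] HP; simpl; auto.
    + exists L; split; auto.
      intros x [<-|Hx] HP; [contradiction|auto].
Qed.

Lemma list_choice_exists {A B : Type} (Q : A -> B -> Prop) (l : list A) :
  exists L : list (A * B), (forall p, In p L -> Q (fst p) (snd p)) /\
    (forall u, In u l -> (exists t, Q u t) -> exists t, Q u t /\ In (u, t) L).
Proof.
  induction l as [|u l [L [HL1 HL2]]].
  - exists []; split; simpl; [tauto|intros u []].
  - destruct (classic (exists t, Q u t)) as [[t Ht]|Hn].
    + exists ((u, t) :: L); split.
      * intros p [<-|Hp]; auto.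
      * intros v [<-|Hv] Hex.
        -- exists t; simpl; auto.
        -- destruct (HL2 v Hv Hex) as [t' [Ht' Hin]]; exists t'; simpl; auto.
    + exists L; split; auto.
      intros v [<-|Hv] Hex; [contradiction|auto].
Qed.

Section RightCongruence.
Variable S : Semigroup.

Lemma r_ann_right_congruence (a : S) : right_congruence S (r_ann S a).
Proof.
  unfold r_ann; repeat split.
  - intros s t H; auto.
  - intros s t u H1 H2; congruence.
  - intros s t u H; rewrite !sg_assoc, H; reflexivity.
Qed.

Lemma rc_gen_right_congruence (X : list (S * S)) : right_congruence S (rc_gen S X).
Proof.
  unfold rc_gen; repeat split.
  - intros s rho [R1 _] _; apply R1.
  - intros s t Hst rho Hrho HX; pose proof Hrho as (R1 & R2 & R3 & R4).
    apply R2, Hst; auto.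
  - intros s t u Hst Htu rho Hrho HX; pose proof Hrho as (R1 & R2 & R3 & R4).
    apply R3 with t; [apply Hst | apply Htu]; auto.
  - intros s t u Hst rho Hrho HX; pose proof Hrho as (R1 & R2 & R3 & R4).
    apply R4, Hst; auto.
Qed.

Lemma rc_gen_in (X : list (S * S)) (p : S * S) : In p X -> rc_gen S X (fst p) (snd p).
Proof. intros Hp rho _ HX; auto. Qed.

Lemma rc_gen_incl (X Y : list (S * S)) (s t : S) :
  incl X Y -> rc_gen S X s t -> rc_gen S Y s t.
Proof. intros HXY Hst rho Hrho HY; apply Hst; auto. Qed.

Lemma fin_gen_rcI (rho : S -> S -> Prop) (X : list (S * S)) :
  right_congruence S rho -> (forall p, In p X -> rho (fst p) (snd p)) ->
  (forall s t, rho s t -> rc_gen S X s t) -> fin_gen_rc S rho.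
Proof. intros Hrho HX Hgen; exists X; split; auto; intros Hst; apply Hst; auto. Qed.

End RightCongruence.

Section Subsemigroup.
Variables (S : Semigroup) (T : S -> Prop) (HT : subsemigroup S T).

Definition lift_pairs (X : list (sub_sg HT * sub_sg HT)) : list (S * S) :=
  map (fun p => (proj1_sig (fst p), proj1_sig (snd p))) X.

Lemma r_ann_subE (a x y : sub_sg HT) :
  r_ann (sub_sg HT) a x y <-> r_ann S (proj1_sig a) (proj1_sig x) (proj1_sig y).
Proof.
  unfold r_ann; simpl; unfold sub_op; split.
  - intros H; apply (f_equal (@proj1_sig _ _)) in H; exact H.
  - intros H; apply eq_sig_hprop; [intros; apply proof_irrelevance | exact H].
Qed.

Lemma right_congruence_restrict (rho : S -> S -> Prop) :
  right_congruence S rho ->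
  right_congruence (sub_sg HT) (fun x y => rho (proj1_sig x) (proj1_sig y)).
Proof.
  intros [R1 [R2 [R3 R4]]]; repeat split.
  - intros s; apply R1.
  - intros s t; apply R2.
  - intros s t u; apply R3.
  - intros s t u; apply R4.
Qed.

Lemma rc_gen_lift (X : list (sub_sg HT * sub_sg HT)) (x y : sub_sg HT) :
  rc_gen (sub_sg HT) X x y -> rc_gen S (lift_pairs X) (proj1_sig x) (proj1_sig y).
Proof.
  intros Hxy rho Hrho HX.
  apply (Hxy (fun x y => rho (proj1_sig x) (proj1_sig y))).
  - apply right_congruence_restrict, Hrho.
  - intros p Hp; apply (HX (proj1_sig (fst p), proj1_sig (snd p))).
    apply (in_map (fun p => (proj1_sig (fst p), proj1_sig (snd p))) X p Hp).
Qed.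

Lemma fin_gen_r_ann_of_sub (a : S) (ha : T a) :
  (exists l : list S, forall x, ~ T x -> In x l) ->
  fin_gen_rc (sub_sg HT) (r_ann (sub_sg HT) (exist T a ha)) ->
  fin_gen_rc S (r_ann S a).
Proof.
  intros [l Hl] [X HX].
  destruct (list_filter_exists
              (fun p : S * S => ~ T (fst p) /\ ~ T (snd p) /\ r_ann S a (fst p) (snd p))
              (list_prod l l)) as [Y [HY1 HY2]].
  destruct (list_choice_exists (fun u t => T t /\ r_ann S a u t) l) as [Z [HZ1 HZ2]].
  set (G := lift_pairs X ++ Y ++ Z).
  pose proof (rc_gen_right_congruence S G) as [_ [G2 [G3 _]]].
  assert (inside_T : forall x y, T x -> T y -> r_ann S a x y -> rc_gen S G x y).
  { intros x y hx hy Hxy.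
    apply rc_gen_incl with (lift_pairs X); [intros p Hp; apply in_or_app; auto|].
    apply (rc_gen_lift X (exist T x hx) (exist T y hy)), HX, r_ann_subE, Hxy. }
  assert (to_T : forall u v, ~ T u -> T v -> r_ann S a u v ->
                   exists w, T w /\ r_ann S a u w /\ rc_gen S G u w).
  { intros u v hu hv Huv.
    destruct (HZ2 u (Hl u hu)) as [w [[hw Huw] Hin]]; [exists v; auto|].
    exists w; repeat split; auto.
    apply (rc_gen_in S G (u, w)), in_or_app; right; apply in_or_app; auto. }
  apply fin_gen_rcI with G; [apply r_ann_right_congruence| |].
  - intros p Hp; apply in_app_or in Hp as [Hp|[Hp|Hp]%in_app_or].
    + apply in_map_iff in Hp as [q [<- Hq]].
      apply (r_ann_subE (exist T a ha) (fst q) (snd q)), (proj1 (HX _ _)), rc_gen_in, Hq.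
    + apply HY1; auto.
    + apply HZ1; auto.
  - intros s t Hst.
    destruct (classic (T s)) as [hs|hs]; destruct (classic (T t)) as [ht|ht].
    + apply inside_T; auto.
    + destruct (to_T t s ht hs) as [w [hw [Htw Hgen]]]; [symmetry; exact Hst|].
      apply G3 with w; [|apply G2, Hgen].
      apply inside_T; auto; unfold r_ann in *; congruence.
    + destruct (to_T s t hs ht Hst) as [w [hw [Hsw Hgen]]].
      apply G3 with w; [exact Hgen|].
      apply inside_T; auto; unfold r_ann in *; congruence.
    + apply (rc_gen_in S G (s, t)), in_or_app; right; apply in_or_app; left.
      apply HY2; [apply in_prod|]; simpl; auto.
Qed.

End Subsemigroup.

Theorem mainTheorem11 (S : Semigroup) (T : S -> Prop) (HT : subsemigroup S T) :
  (exists l : list S, forall x : S, ~ T x -> In x l) ->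
  fin_right_equated (sub_sg HT) ->
  (fin_right_equated S <-> forall a : S, ~ T a -> fin_gen_rc S (r_ann S a)).
Proof.
  intros Hfin HfT; split.
  - intros H a _; apply H.
  - intros Hout a.
    destruct (classic (T a)) as [ha|ha].
    + apply (fin_gen_r_ann_of_sub S T HT a ha Hfin (HfT _)).
    + apply Hout, ha.
Qed.
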